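(* Let $\{(i\mid A_i): i\in[m]\}$ be an index coding instance, $B_i=[m]\setminus(A_i\cup\{i\})$, let $\boldsymbol{G}\in\{0,1\}^{r\times m}$ with row supports $G_j=\{i: g_{j,i}=1\}$, let $k\in[r]$ and let $d\ge1$ be an integer. Suppose $|F_K|\ge d-1+|K|$ for every nonempty $K\subseteq[k]$, where $F_K=\bigcup_{j\in K}G_j$. If $i\in[m]$ satisfies (1) $|F_{[k]}|=d-1+k$, (2) $\{i\}\cup A_i\subseteq F_{[k]}$, and (3) $|A_i|\ge d-1$, then $$\mathrm{mcm}(\boldsymbol{G}_{[k]}^{\{i\}\cup B_i})=1+\mathrm{mcm}(\boldsymbol{G}_{[k]}^{B_i}).$$
   Context: $\boldsymbol{G}_{[k]}^{L}$ is the submatrix of $\boldsymbol{G}$ formed by its first $k$ rows and the columns indexed by $L$. $\mathrm{mcm}(\boldsymbol{G})$ is the maximum number of entries equal to $1$ no two of which lie in the same row or column (maximum matching size of the associated row–column bipartite graph); it is $0$ for a matrix with no columns. *)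

From mathcomp Require Import all_boot all_order all_algebra.
Set Implicit Arguments. Unset Strict Implicit. Unset Printing Implicit Defensive.

Definition is_mx_matching (p q : nat) (A : 'M[bool]_(p, q))
    (M : {set 'I_p * 'I_q}) : bool :=
  [forall x in M, A x.1 x.2] &&
  [forall x in M, forall y in M, ((x.1 == y.1) || (x.2 == y.2)) ==> (x == y)].

Definition mcm (p q : nat) (A : 'M[bool]_(p, q)) : nat :=
  \max_(M : {set 'I_p * 'I_q} | is_mx_matching A M) #|M|.

(* G_[k]^L : submatrix of G formed by its first k rows and columns indexed
   by L (columns listed in the order of enum L; order is irrelevant for mcm). *)
Definition subG (r m k : nat) (hk : k <= r) (G : 'M[bool]_(r, m))
    (L : {set 'I_m}) : 'M[bool]_(k, #|L|) :=
  \matrix_(j < k, c < #|L|) G (widen_ord hk j) (enum_val c).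

Definition rowsupp (r m : nat) (G : 'M[bool]_(r, m)) (j : 'I_r) : {set 'I_m} :=
  [set i | G j i].

Definition FK (r m : nat) (G : 'M[bool]_(r, m)) (K : {set 'I_r}) : {set 'I_m} :=
  \bigcup_(j in K) rowsupp G j.

Definition firstk (r k : nat) : {set 'I_r} := [set j : 'I_r | j < k].

Definition Bset (m : nat) (A : 'I_m -> {set 'I_m}) (i : 'I_m) : {set 'I_m} :=
  ~: (A i :|: [set i]).

From mathcomp Require Import all_boot all_order all_algebra.
From mathcomp Require Import zify.
Set Implicit Arguments. Unset Strict Implicit. Unset Printing Implicit Defensive.

(* Let F = F_[k] and C = F :\: A_i; then i \in C and |C| <= k by (1) and (3).
   A 1-entry of G_[k] in a column of B_i lies in F, so such columns lie in
   C :\ i and mcm(G_[k]^{B_i}) <= |C| - 1; adding the single column i raises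
   mcm by at most one.  Conversely, the hypothesis on the F_K, combined with
   (1), is Hall's condition for matching the columns of C into the first k
   rows, so mcm(G_[k]^{{i} u B_i}) >= |C|. *)

Section Matchings.
Variables I J : finType.
Implicit Types (R : I -> J -> bool) (M : {set I * J}) (S X : {set J}) (Y : {set I}).

Definition rel_matching R M : bool :=
  [forall x in M, R x.1 x.2] &&
  [forall x in M, forall y in M, ((x.1 == y.1) || (x.2 == y.2)) ==> (x == y)].

Definition max_matching R : nat := \max_(M | rel_matching R M) #|M|.

Definition row_restr R Y : I -> J -> bool := fun i j => (i \in Y) && R i j.
Definition col_restr R X : I -> J -> bool := fun i j => (j \in X) && R i j.

Definition nbh R X : {set I} := [set i | [exists j in X, R i j]].

Definition hall_cond R S := forall X, X \subset S -> #|X| <= #|nbh R X|.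

Definition matchable R S := exists2 M, rel_matching R M & snd @: M = S.

Lemma rel_matchingP R M :
  reflect [/\ {in M, forall x, R x.1 x.2}, {in M &, injective fst}
            & {in M &, injective snd}] (rel_matching R M).
Proof.
apply: (iffP andP) => [[/forall_inP RM /forall_inP injM] | [RM inj1 inj2]].
  have eqM x y : x \in M -> y \in M -> (x.1 == y.1) || (x.2 == y.2) -> x = y.
    by move=> xM yM e; apply/eqP; move/forall_inP/(_ y yM)/implyP: (injM x xM); apply.
  by split=> // x y xM yM e; apply: eqM; rewrite // e eqxx ?orbT.
split; first exact/forall_inP.
apply/forall_inP=> x xM; apply/forall_inP=> y yM; apply/implyP.
by case/orP=> /eqP e; apply/eqP; [apply: inj1 | apply: inj2].
Qed.

Lemma sub_rel_matching R R' M :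
  (forall i j, R i j -> R' i j) -> rel_matching R M -> rel_matching R' M.
Proof.
by move=> RR' /rel_matchingP[RM inj1 inj2]; apply/rel_matchingP; split=> // x /RM/RR'.
Qed.

Lemma rel_matchingS R M M' : M' \subset M -> rel_matching R M -> rel_matching R M'.
Proof.
move=> /subsetP sM /rel_matchingP[RM inj1 inj2]; apply/rel_matchingP.
by split=> [x /sM/RM | x y /sM xM /sM yM | x y /sM xM /sM yM]; [| apply: inj1 | apply: inj2].
Qed.

Lemma rel_matching_col_restr R X M :
  rel_matching (col_restr R X) M = rel_matching R M && (snd @: M \subset X).
Proof.
apply/rel_matchingP/andP => [[RM inj1 inj2] | [/rel_matchingP[RM inj1 inj2] MX]].
  split; last by apply/subsetP=> _ /imsetP[x /RM /andP[xX _] ->].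
  by apply/rel_matchingP; split=> // x /RM /andP[].
split=> // x xM; apply/andP; split; last exact: RM.
exact: subsetP MX _ (imset_f _ xM).
Qed.

Lemma card_rel_matching R M X : rel_matching R M -> snd @: M \subset X -> #|M| <= #|X|.
Proof. by case/rel_matchingP=> _ _ /card_in_imset <- /subset_leq_card. Qed.

Lemma max_matching_ge R M : rel_matching R M -> #|M| <= max_matching R.
Proof. exact: leq_bigmax_cond. Qed.

Lemma eq_max_matching R R' : R =2 R' -> max_matching R = max_matching R'.
Proof.
move=> eR; apply/eqP; rewrite eqn_leq; apply/andP; split; apply/bigmax_leqP => M MR;
  by apply/max_matching_ge/(sub_rel_matching _ MR) => i j; rewrite eR.
Qed.

Lemma max_matching_le_card R X :
  (forall i j, R i j -> j \in X) -> max_matching R <= #|X|.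
Proof.
move=> RX; apply/bigmax_leqP => M MR; apply: (card_rel_matching MR).
by have /rel_matchingP[RM _ _] := MR; apply/subsetP=> _ /imsetP[x /RM /RX xX ->].
Qed.

Lemma max_matching_col_del R j0 :
  max_matching R <= (max_matching (col_restr R [set~ j0])).+1.
Proof.
apply/bigmax_leqP => M MR.
rewrite -(cardsID [set x | x.2 == j0] M) addnC -addn1 leq_add //.
  apply: max_matching_ge.
  rewrite rel_matching_col_restr (rel_matchingS _ MR) ?subsetDl //.
  by apply/subsetP=> _ /imsetP[x /setDP[_ xj0] ->]; move: xj0; rewrite !inE.
rewrite -(cards1 j0); apply: card_rel_matching (rel_matchingS (subsetIl _ _) MR) _.
by apply/subsetP=> _ /imsetP[x /setIP[_ xj0] ->]; move: xj0; rewrite !inE.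
Qed.

Lemma matchable_le_max_matching R S X :
  S \subset X -> matchable R S -> #|S| <= max_matching (col_restr R X).
Proof.
move=> SX [M MR MS]; have /rel_matchingP[_ _ /card_in_imset] := MR.
by rewrite MS => ->; apply: max_matching_ge; rewrite rel_matching_col_restr MR MS.
Qed.

Lemma nbhU R X1 X2 : nbh R (X1 :|: X2) = nbh R X1 :|: nbh R X2.
Proof.
apply/setP=> i; rewrite !inE; apply/existsP/orP => [[j] | [] /existsP[j /andP[jX Rij]]].
  by rewrite inE => /andP[/orP[] jX Rij]; [left | right];
     apply/existsP; exists j; rewrite jX.
  by exists j; rewrite inE jX Rij.
by exists j; rewrite inE jX Rij orbT.
Qed.

Lemma nbh_row_restr R Y X : nbh (row_restr R (~: Y)) X = nbh R X :\: Y.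
Proof.
apply/setP=> i; rewrite !inE /row_restr inE.
by case: (i \in Y) => //=; apply/exists_inP => -[].
Qed.

Lemma hall_cond_tight R S X :
    hall_cond R S -> X \subset S -> #|nbh R X| <= #|X| ->
  hall_cond (row_restr R (~: nbh R X)) (S :\: X).
Proof.
move=> hS XS tight Z /subsetP ZSX.
have ZX : [disjoint Z & X].
  by apply/pred0P=> j /=; apply/andP=> -[/ZSX]; rewrite inE => /andP[/negbTE->].
have ZXS : Z :|: X \subset S by rewrite subUset XS andbT; apply/subsetP=> j /ZSX /setDP[].
have := hS _ ZXS.
rewrite nbhU cardsU (disjoint_setI0 ZX) cards0 subn0 nbh_row_restr cardsD.
by have := cardsUI (nbh R Z) (nbh R X); lia.
Qed.

Lemma hall_cond_loose R S i j :
    (forall X, X \subset S -> X != set0 -> X != S -> #|X| < #|nbh R X|) ->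
    j \in S -> hall_cond (row_restr R (~: [set i])) (S :\ j).
Proof.
move=> loose jS X XSj; rewrite nbh_row_restr cardsD.
have [-> | X0] := eqVneq X set0; first by rewrite cards0.
have XS : X \subset S by apply: subset_trans XSj (subsetDl _ _).
have XnS : X != S.
  by apply: contraTneq XSj => ->; apply/subsetPn; exists j; rewrite ?inE ?eqxx.
have := loose X XS X0 XnS; have := subset_leq_card (subsetIr (nbh R X) [set i]).
by rewrite cards1; lia.
Qed.

Lemma matchable_join R S X Y M :
    rel_matching R M -> snd @: M = X -> X \subset S -> fst @: M \subset Y ->
    matchable (row_restr R (~: Y)) (S :\: X) ->
  matchable R S.
Proof.
move=> /rel_matchingP[RM inj1 inj2] MX XS /subsetP MY.
case=> N /rel_matchingP[RN inj1' inj2'] NS.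
have MN1 x y : x \in M -> y \in N -> x.1 != y.1.
  move=> xM /RN /andP[]; rewrite inE => yY _.
  by apply: contraNneq yY => <-; apply/MY/imset_f.
have MN2 x y : x \in M -> y \in N -> x.2 != y.2.
  move=> xM yN; have /setDP[_] : y.2 \in S :\: X by rewrite -NS imset_f.
  by apply: contraNneq => <-; rewrite -MX imset_f.
exists (M :|: N); last first.
  apply/setP=> j; rewrite imsetU MX NS !inE.
  by case: (boolP (j \in X)) => [/(subsetP XS)-> | _].
apply/rel_matchingP; split=> [x /setUP[/RM // | /RN /andP[]] // | x y | x y];
  move=> /setUP[xM | xN] /setUP[yM | yN] e //; try by [apply: inj1 | apply: inj2 |
  apply: inj1' | apply: inj2'].
all: by [case/eqP: (MN1 _ _ xM yN) | case/eqP: (MN1 _ _ yM xN) |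
         case/eqP: (MN2 _ _ xM yN) | case/eqP: (MN2 _ _ yM xN)].
Qed.

(* Hall's marriage theorem, by the classical induction: either some proper
   nonempty X is tight and S splits into X and S :\: X, or every such X has
   surplus and any one edge can be matched first. *)
Theorem hall R S : hall_cond R S -> matchable R S.
Proof.
elim: {S}_.+1 {-2}S (ltnSn #|S|) R => // n IH S /ltnSE leSn R hS.
case: (pickP [pred X : {set J} | [&& X \subset S, X != set0, X != S
                                   & #|nbh R X| <= #|X|]]) => [X | loose].
  case/and4P=> XS X0 XnS tight.
  have ltXS : #|X| < #|S| by apply: proper_card; rewrite properEneq XnS.
  have hX : hall_cond R X by move=> Z ZX; apply/hS/(subset_trans ZX XS).
  have [M MR MX] := IH X (leq_trans ltXS leSn) R hX.
  apply: (matchable_join (Y := nbh R X) MR MX XS).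
    apply/subsetP=> _ /imsetP[x xM ->]; have /rel_matchingP[RM _ _] := MR.
    by rewrite /nbh inE; apply/exists_inP; exists x.2; rewrite -?MX ?imset_f // RM.
  apply: (IH _ _ _ (hall_cond_tight hS XS tight)).
  by rewrite cardsDS //; move: X0; rewrite -card_gt0; lia.
have [-> | [j jS]] := set_0Vmem S.
  by exists set0; rewrite ?imset0 //; apply/rel_matchingP; split=> x; rewrite inE.
have /card_gt0P[i] : 0 < #|nbh R [set j]|.
  by rewrite -(cards1 j) hS // sub1set.
rewrite inE => /exists_inP[j' /set1P -> Rij].
have loose' X : X \subset S -> X != set0 -> X != S -> #|X| < #|nbh R X|.
  by move=> XS X0 XnS; move/negbT: (loose X); rewrite /= XS X0 XnS ltnNge.
apply: (matchable_join (M := [set (i, j)]) (Y := [set i]));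
  rewrite ?imset_set1 ?sub1set /= ?set11 //.
  by apply/rel_matchingP; split=> [x | x y | x y]; rewrite ?inE => /eqP-> // /eqP->.
apply: (IH _ _ _ (hall_cond_loose i loose' jS)).
by move: leSn; rewrite (cardsD1 j S) jS; lia.
Qed.

End Matchings.

Lemma rel_matching_map (I J J' : finType) (R : I -> J -> bool) (R' : I -> J' -> bool)
    (h : J -> J') (M : {set I * J}) :
    injective h -> (forall i j, R' i (h j) = R i j) ->
  rel_matching R' [set (x.1, h x.2) | x in M] = rel_matching R M.
Proof.
move=> hinj hR; set g := fun x : I * J => (x.1, h x.2).
have ginj : injective g by move=> [i j] [i' j'] [-> /hinj ->].
apply/rel_matchingP/rel_matchingP => [[RM inj1 inj2] | [RM inj1 inj2]].
  split=> [x xM | x y xM yM e | x y xM yM e].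
  - by rewrite -hR (RM (g x) (imset_f _ xM)).
  - by apply: ginj; apply: inj1; rewrite ?imset_f //= e.
  - by apply: ginj; apply: inj2; rewrite ?imset_f //= e.
split=> [_ /imsetP[x xM ->] | _ _ /imsetP[x xM ->] /imsetP[y yM ->] /= e
        | _ _ /imsetP[x xM ->] /imsetP[y yM ->] /= /hinj e].
- by rewrite /= hR RM.
- by rewrite (inj1 x y xM yM e).
- by rewrite (inj2 x y xM yM e).
Qed.

Lemma max_matching_map (I J J' : finType) (R : I -> J -> bool) (R' : I -> J' -> bool)
    (h : J -> J') :
    injective h -> (forall i j, R' i (h j) = R i j) ->
    (forall i j', R' i j' -> j' \in codom h) ->
  max_matching R' = max_matching R.
Proof.
move=> hinj hR R'h; set g := fun x : I * J => (x.1, h x.2).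
have ginj : injective g by move=> [i j] [i' j'] [-> /hinj ->].
apply/eqP; rewrite eqn_leq; apply/andP; split; apply/bigmax_leqP => M MR; last first.
  rewrite -(card_imset _ ginj); apply: max_matching_ge.
  by rewrite /g (rel_matching_map M hinj hR).
have /rel_matchingP[RM _ _] := MR.
have eM : g @: [set x | g x \in M] = M.
  apply/setP=> x; apply/imsetP/idP => [[y] | xM]; first by rewrite inE => yM ->.
  have /codomP[j ej] := R'h _ _ (RM x xM).
  by exists (x.1, j); rewrite ?inE /g /= -ej -?surjective_pairing.
rewrite -eM card_imset //; apply: max_matching_ge.
by rewrite -(rel_matching_map [set x | g x \in M] hinj hR) eM.
Qed.

Section FirstRows.
Variables (m r k : nat) (hk : k <= r) (G : 'M[bool]_(r, m)).

Let Gk (j : 'I_k) (c : 'I_m) : bool := G (widen_ord hk j) c.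

Lemma mcm_subG (L : {set 'I_m}) : mcm (subG hk G L) = max_matching (col_restr Gk L).
Proof.
symmetry; apply: (max_matching_map (@enum_val_inj _ L)) => [j c | j c /andP[cL _]].
  by rewrite /col_restr mxE enum_valP.
by apply/codomP; exists (enum_rank_in cL c); rewrite enum_rankK_in.
Qed.

Lemma mem_FK_firstk j c : Gk j c -> c \in FK G (firstk r k).
Proof.
rewrite /FK => Gjc; apply/bigcupP; exists (widen_ord hk j); last by rewrite inE.
by rewrite inE; exact: (ltn_ord j).
Qed.

Variable d : nat.
Hypothesis hHall : forall K : {set 'I_r}, K \subset firstk r k -> K != set0 ->
  d - 1 + #|K| <= #|FK G K|.
Hypothesis tight : #|FK G (firstk r k)| = d - 1 + k.

(* Apply the hypothesis on F_K to the rows K of [k] that miss X: F_K avoids X. *)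
Lemma card_nbh_firstk (X : {set 'I_m}) :
  X \subset FK G (firstk r k) -> #|nbh Gk X| < k -> #|X| <= #|nbh Gk X|.
Proof.
move=> XF ltk; set K := widen_ord hk @: ~: nbh Gk X.
have widen_inj : injective (widen_ord hk).
  by move=> j j' e; apply: val_inj; exact: (congr1 val e).
have cardK : #|K| = k - #|nbh Gk X| by rewrite card_imset // cardsCs setCK card_ord.
have Kk : K \subset firstk r k.
  by apply/subsetP=> _ /imsetP[j _ ->]; rewrite inE; exact: (ltn_ord j).
have K0 : K != set0 by rewrite -card_gt0 cardK subn_gt0.
have FKsub : FK G K \subset FK G (firstk r k) :\: X.
  apply/subsetP=> c /bigcupP[_ /imsetP[j jX ->]]; rewrite inE => Gjc.
  rewrite inE (mem_FK_firstk Gjc) andbT; move: jX; rewrite inE; apply: contra => cX.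
  by rewrite /nbh inE; apply/exists_inP; exists c.
have := hHall Kk K0; have := subset_leq_card FKsub.
by rewrite cardsDS // tight cardK; lia.
Qed.

End FirstRows.

Theorem lemma2 (m r : nat) (A : 'I_m -> {set 'I_m})
  (hA : forall i : 'I_m, i \notin A i)
  (G : 'M[bool]_(r, m)) (k : nat) (hk1 : 1 <= k) (hk : k <= r) (d : nat)
  (hd : 1 <= d)
  (hHall : forall K : {set 'I_r}, K \subset firstk r k -> K != set0 ->
             d - 1 + #|K| <= #|FK G K|)
  (i : 'I_m)
  (h1 : #|FK G (firstk r k)| = d - 1 + k)
  (h2 : i |: A i \subset FK G (firstk r k))
  (h3 : d - 1 <= #|A i|) :
  mcm (subG hk G (i |: Bset A i)) = 1 + mcm (subG hk G (Bset A i)).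
Proof.
set F := FK G (firstk r k); set B := Bset A i; set C := F :\: A i.
have AF : A i \subset F by apply: subset_trans h2; apply: subsetUr.
have iC : i \in C by rewrite !inE hA (subsetP h2) ?setU11.
have CiB : C \subset i |: B.
  by apply/subsetP=> c /setDP[_ cA]; rewrite !inE (negbTE cA) orbN.
have cardC : #|C| <= k by rewrite cardsDS // h1; lia.
have hallC : hall_cond (fun j c => G (widen_ord hk j) c) C.
  move=> X XC; have XF : X \subset F := subset_trans XC (subsetDl _ _).
  case: (ltnP #|nbh (fun j c => G (widen_ord hk j) c) X| k) => [lt | ge].
    exact: (card_nbh_firstk (hk := hk) hHall h1 XF lt).
  exact: leq_trans (subset_leq_card XC) (leq_trans cardC ge).
have lower : #|C| <= mcm (subG hk G (i |: B)).
  by rewrite mcm_subG; apply: matchable_le_max_matching CiB (hall hallC).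
have upperB : mcm (subG hk G B) <= #|C :\ i|.
  rewrite mcm_subG; apply: max_matching_le_card => j c /andP[cB /mem_FK_firstk cF].
  by move: cB; rewrite !inE cF negb_or andbT andbC.
have upper : mcm (subG hk G (i |: B)) <= (mcm (subG hk G B)).+1.
  rewrite !mcm_subG; apply: leq_trans (max_matching_col_del _ i) _.
  rewrite ltnS; apply/eq_leq/eq_max_matching => j c.
  by rewrite /col_restr !inE; case: eqP; rewrite ?orbT.
have cardCi : #|C| = #|C :\ i|.+1 by rewrite (cardsD1 i C) iC.
lia.
Qed.
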